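(* For all pure terms $t,t'$: $t\equiv t'$ if and only if $t=t'$ (syntactic equality up to $\alpha$-conversion).
   Context: Pure terms are those of the calculus with pure values $v::=x\mid\lambda x.\vec{s}\mid *\mid (v_1,v_2)\mid \mathtt{inl}(v)\mid\mathtt{inr}(v)$ and pure terms $s,t::=v\mid s\,t\mid t;\vec{s}\mid \mathtt{let}\,(x_1,x_2)=t\,\mathtt{in}\,\vec{s}\mid \mathtt{match}\,t\,\{\mathtt{inl}\,x_1\mapsto\vec{s}_1\mid\mathtt{inr}\,x_2\mapsto\vec{s}_2\}$, considered up to $\alpha$-conversion. Term distributions are formal expressions $\vec{t}::=\vec{0}\mid t\mid \vec{s}+\vec{t}\mid\alpha\cdot\vec{t}$ ($\alpha\in\mathbb{C}$). $\equiv$ is the congruence on term distributions (going only through $+$ and $\cdot$, never inside pure terms) generated by: $\vec t+\vec0\equiv\vec t$; $1\cdot\vec t\equiv\vec t$; $\alpha\cdot(\beta\cdot\vec t)\equiv\alpha\beta\cdot\vec t$; commutativity and associativity of $+$; $(\alpha+\beta)\cdot\vec t\equiv\alpha\cdot\vec t+\beta\cdot\vec t$; $\alpha\cdot(\vec t_1+\vec t_2)\equiv\alpha\cdot\vec t_1+\alpha\cdot\vec t_2$. *)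

From Stdlib Require Import Reals.
From Coquelicot Require Import Complex.

(* Variables are de Bruijn indices, so syntactic equality (Leibniz =)
   coincides with equality up to alpha-conversion.
   Binders:  Lam d      binds 1 variable in d;
             LetPair t d binds 2 variables (x1 = index 1, x2 = index 0) in d;
             Match t d1 d2 binds 1 variable in each of d1, d2;
             Seq t d    binds nothing. *)
Inductive value : Type :=
  | Var  : nat -> value
  | Lam  : dist -> value
  | Star : value
  | Pair : value -> value -> value
  | Inl  : value -> value
  | Inr  : value -> value
with term : Type :=
  | Val     : value -> term
  | App     : term -> term -> term
  | Seq     : term -> dist -> term
  | LetPair : term -> dist -> term
  | Match   : term -> dist -> dist -> term
with dist : Type :=
  | DZero  : dist
  | DPure  : term -> dist
  | DPlus  : dist -> dist -> dist
  | DScale : C -> dist -> dist.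

(* The congruence ≡ on term distributions: the smallest equivalence relation
   closed under + and · (never going inside pure terms) containing the axioms. *)
Inductive dequiv : dist -> dist -> Prop :=
  | eq_refl_   : forall d, dequiv d d
  | eq_sym_    : forall d1 d2, dequiv d1 d2 -> dequiv d2 d1
  | eq_trans_  : forall d1 d2 d3, dequiv d1 d2 -> dequiv d2 d3 -> dequiv d1 d3
  | eq_plus_   : forall d1 d1' d2 d2', dequiv d1 d1' -> dequiv d2 d2' ->
                   dequiv (DPlus d1 d2) (DPlus d1' d2')
  | eq_scale_  : forall a d d', dequiv d d' -> dequiv (DScale a d) (DScale a d')
  | ax_zero    : forall d, dequiv (DPlus d DZero) d
  | ax_one     : forall d, dequiv (DScale (RtoC 1) d) d
  | ax_assocS  : forall a b d, dequiv (DScale a (DScale b d)) (DScale (Cmult a b) d)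
  | ax_comm    : forall d1 d2, dequiv (DPlus d1 d2) (DPlus d2 d1)
  | ax_assoc   : forall d1 d2 d3,
                   dequiv (DPlus (DPlus d1 d2) d3) (DPlus d1 (DPlus d2 d3))
  | ax_distrS  : forall a b d,
                   dequiv (DScale (Cplus a b) d) (DPlus (DScale a d) (DScale b d))
  | ax_distrV  : forall a d1 d2,
                   dequiv (DScale a (DPlus d1 d2)) (DPlus (DScale a d1) (DScale a d2)).

From Pilot Require Import Defs.
From Stdlib Require Import Reals ClassicalEpsilon.
From Coquelicot Require Import Complex.

(* Read a term distribution as a formal complex linear combination of pure
   terms: every generating axiom of ≡ is a vector-space identity, so the
   coefficient of each pure term is invariant under ≡.  The distribution [t]
   has coefficient 1 at t and 0 at every other term, so t ≡ t' forces t = t'. *)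

(* Equality of terms is not decidable (terms contain complex scalars), hence
   the classical choice of the coefficient of a single term. *)
Definition coef_pure (t s : term) : C :=
  if excluded_middle_informative (t = s) then RtoC 1 else RtoC 0.

Fixpoint coef (d : Defs.dist) (s : term) : C :=
  match d with
  | DZero => RtoC 0
  | DPure t => coef_pure t s
  | DPlus d1 d2 => Cplus (coef d1 s) (coef d2 s)
  | DScale a d => Cmult a (coef d s)
  end.

Lemma coef_pure_self (t : term) : coef (DPure t) t = RtoC 1.
Proof.
  simpl; unfold coef_pure.
  destruct (excluded_middle_informative (t = t)) as [_ | Hneq].
  - reflexivity.
  - contradiction Hneq; reflexivity.
Qed.

Lemma coef_pure_neq (t s : term) : t <> s -> coef (DPure t) s = RtoC 0.
Proof.
  intro Hneq; simpl; unfold coef_pure.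
  destruct (excluded_middle_informative (t = s)) as [Heq | _].
  - contradiction.
  - reflexivity.
Qed.

Lemma dequiv_coef (d d' : Defs.dist) :
  dequiv d d' -> forall s, coef d s = coef d' s.
Proof.
  induction 1; intro s; simpl.
  - reflexivity.
  - symmetry; apply IHdequiv.
  - rewrite IHdequiv1; apply IHdequiv2.
  - rewrite IHdequiv1, IHdequiv2; reflexivity.
  - rewrite IHdequiv; reflexivity.
  - apply Cplus_0_r.
  - apply Cmult_1_l.
  - apply Cmult_assoc.
  - apply Cplus_comm.
  - symmetry; apply Cplus_assoc.
  - apply Cmult_plus_distr_r.
  - apply Cmult_plus_distr_l.
Qed.

Theorem corollary1 : forall t t' : term, dequiv (DPure t) (DPure t') <-> t = t'.
Proof.
  intros t t'; split.
  - intro Hequiv.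
    destruct (excluded_middle_informative (t' = t)) as [Heq | Hneq].
    + symmetry; exact Heq.
    + exfalso; apply C1_nz.
      rewrite <- (coef_pure_self t), (dequiv_coef _ _ Hequiv t).
      exact (coef_pure_neq t' t Hneq).
  - intros ->; apply eq_refl_.
Qed.
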